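(* Suppose $\xi$ is an $\mathcal{S}$-shrinking point of the map $f$, where $\mathcal{S}=\mathcal{F}[\ell,m,n]$. If $\sigma<1$, then $c>0$.
   Context: Fix $N\ge2$. For $\mu\in\mathbb{R}$ and a parameter $\xi$, $f(x)=A_Lx+B\mu$ if $e_1^{\mathsf T}x\le0$, $f(x)=A_Rx+B\mu$ if $e_1^{\mathsf T}x\ge0$, with $A_L,A_R$ real $N\times N$, $B\in\mathbb{R}^N$ and $A_R=A_L+Ce_1^{\mathsf T}$ for some $C$. $f^L(x)=A_Lx+B\mu$, $f^R(x)=A_Rx+B\mu$, $\varrho^{\mathsf T}=e_1^{\mathsf T}\mathrm{adj}(I-A_L)$. A periodic $\mathcal{S}:\mathbb{Z}\to\{L,R\}$ of period $n$ is identified with $\mathcal{S}_0\cdots\mathcal{S}_{n-1}$; indices mod $n$; $\mathcal{S}^{\overline j}$ differs from $\mathcal{S}$ exactly at indices $\equiv j$; $M_{\mathcal{S}}=A_{\mathcal{S}_{n-1}}\cdots A_{\mathcal{S}_0}$. An $\mathcal{S}$-cycle is $(x_0,\dots,x_{n-1})$ with $x_{(i+1)\bmod n}=f^{\mathcal{S}_i}(x_i)$; admissible if $e_1^{\mathsf T}x_i\le0$ whenever $\mathcal{S}_i=L$ and $\ge0$ whenever $\mathcal{S}_i=R$. $\mathcal{F}[\ell,m,n]_i=L$ if $im\bmod n<\ell$ and $R$ otherwise ($\ell<n$, $m<n$ positive, $\gcd(m,n)=1$); $d$ is the inverse of $m$ mod $n$. Shrinking point: with $\mu\ne0$, $\varrho^{\mathsf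 T}B\ne0$, $2\le\ell\le n-2$, $\xi$ is an $\mathcal{S}$-shrinking point if $\det(I-M_{\mathcal{S}^{\overline0}})\ne0$, $\det(I-M_{\mathcal{S}^{\overline{\ell d}}})\ne0$, the (unique) $\mathcal{S}^{\overline0}$-cycle is admissible and its first coordinates vanish exactly at indices $\equiv0$ and $\equiv\ell d$. At a shrinking point $M_{\mathcal{S}}$ has eigenvalue $1$ with algebraic multiplicity one; writing the eigenvalues of $M_{\mathcal{S}}$ (with multiplicity) as $\rho_1=1,\rho_2,\dots,\rho_N$, one sets $\sigma=\max_{2\le i\le N}|\rho_i|$ and $c=\prod_{i=2}^N(1-\rho_i)$ (the product of the nonzero eigenvalues of $I-M_{\mathcal{S}}$). *)

From HB Require Import structures.
From mathcomp Require Import all_boot all_order all_algebra reals complex.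
Set Implicit Arguments. Unset Strict Implicit. Unset Printing Implicit Defensive.
Import Order.TTheory GRing.Theory Num.Theory.
Local Open Scope ring_scope.

Inductive side := SL | SR.
Definition other (s : side) := if s is SL then SR else SL.

Section PWL.
Variable R : realType.
Variable N : nat.

Definition e1 : 'cV[R]_N := \col_i (if (i : nat) == 0%N then 1 else 0).
Definition firstc (x : 'cV[R]_N) : R := (e1^T *m x) 0 0.

Variables (AL : 'M[R]_N) (C B : 'cV[R]_N) (mu : R).
Definition AR : 'M[R]_N := AL + C *m e1^T.
Definition Aof (s : side) : 'M[R]_N := if s is SL then AL else AR.
Definition fpiece (s : side) (x : 'cV[R]_N) : 'cV[R]_N := Aof s *m x + mu *: B.
Definition varrhoT : 'rV[R]_N := e1^T *m \adj (1%:M - AL).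

(* M_S = A_{S_{k-1}} ... A_{S_0}  (Mprod S n = M_S for period n) *)
Fixpoint Mprod (S : nat -> side) (k : nat) : 'M[R]_N :=
  if k is k'.+1 then Aof (S k') *m Mprod S k' else 1%:M.

Definition is_cycle (S : nat -> side) (n : nat) (x : nat -> 'cV[R]_N) : Prop :=
  forall i, (i < n)%N -> x ((i.+1) %% n)%N = fpiece (S i) (x i).
Definition admissible (S : nat -> side) (n : nat) (x : nat -> 'cV[R]_N) : Prop :=
  forall i, (i < n)%N ->
    (S i = SL -> firstc (x i) <= 0) /\ (S i = SR -> firstc (x i) >= 0).
End PWL.

Definition flip (S : nat -> side) (n j : nat) : nat -> side :=
  fun i => if (i %% n == j %% n)%N then other (S i) else S i.

Definition Fseq (l m n : nat) : nat -> side :=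
  fun i => if ((i * m) %% n < l)%N then SL else SR.

(* xi is an S-shrinking point (S of period n, d the inverse of m mod n) *)
Definition shrinking_point (R : realType) (N : nat) (AL : 'M[R]_N) (C B : 'cV[R]_N)
    (mu : R) (S : nat -> side) (n l d : nat) : Prop :=
  [/\ mu != 0,
      (varrhoT AL *m B) 0 0 != 0,
      ((2 <= l)%N /\ (l <= n - 2)%N),
      (\det (1%:M - Mprod AL C (flip S n 0) n) != 0 /\
       \det (1%:M - Mprod AL C (flip S n (l * d)) n) != 0) &
      exists x : nat -> 'cV[R]_N,
        [/\ is_cycle AL C B mu (flip S n 0) n x,
            admissible (flip S n 0) n x &
            forall i, (i < n)%N ->
              (firstc (x i) = 0 <-> (i %% n = 0 %% n \/ i %% n = (l * d) %% n)%N)]].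

(* The characteristic polynomial of [M_S] is real and monic, so dividing out the
   factor [X - 1] leaves a real monic polynomial [q] whose complex roots are
   [rho_2, ..., rho_N], and [c = q(1)].  All these roots lie in the open unit
   disc, so [q] has no real root in [[1, +oo)]; as [q] is positive at [+oo],
   the intermediate value theorem forces [q(1) > 0]. *)
From HB Require Import structures.
From mathcomp Require Import all_boot all_order all_algebra reals complex polyrcf.
Import Order.TTheory GRing.Theory Num.Theory.
Local Open Scope ring_scope.
Local Open Scope complex_scope.

Lemma horner_gt0_above_roots (R : rcfType) (q : {poly R}) (a : R) :
  0 < lead_coef q -> (forall x, a <= x -> ~~ root q x) -> 0 < q.[a].
Proof.
move=> lq_gt0 no_root; rewrite ltNge; apply/negP => qa_le0.
have [n q_gt_lc] := poly_pinfty_gt_lc lq_gt0.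
pose b := Num.max n a.
have qb_gt0 : 0 < q.[b] by apply: lt_le_trans (q_gt_lc b _); rewrite ?le_max ?lexx.
have ab : a <= b by rewrite le_max lexx orbT.
have [x /andP[ax _]] := poly_ivt ab (introT andP (conj qa_le0 (ltW qb_gt0))).
exact/negP/no_root.
Qed.

Lemma map_divp_XsubC (F : fieldType) (K : fieldType) (f : {rmorphism F -> K})
    (p : {poly F}) (c : F) (q : {poly K}) :
  map_poly f p = ('X - (f c)%:P) * q -> map_poly f (p %/ ('X - c%:P)) = q.
Proof.
move=> Ep; rewrite map_divp Ep rmorphB /= map_polyX map_polyC /=.
by rewrite mulKp // polyXsubC_eq0.
Qed.

Section RealPolyInUnitDisc.
Variables (R : rcfType) (q : {poly R}) (rs : seq R[i]).
Hypothesis q_roots : map_poly (real_complex R) q = \prod_(r <- rs) ('X - r%:P).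
Hypothesis rs_in_disc : forall r, r \in rs -> `|r| < 1.

Let horner_real_complex (x : R) :
  (\prod_(r <- rs) ('X - r%:P)).[x%:C] = (q.[x])%:C.
Proof. by rewrite -q_roots horner_map. Qed.

Lemma lead_coef_real_factor : lead_coef q = 1.
Proof.
apply: (fmorph_inj (real_complex R)).
by rewrite -lead_coef_map q_roots lead_coef_prod_XsubC rmorph1.
Qed.

Lemma real_factor_no_root_ge1 (x : R) : 1 <= x -> ~~ root q x.
Proof.
move=> x_ge1; apply/negP => /eqP qx0.
have /rs_in_disc x_lt1 : x%:C \in rs.
  by rewrite -root_prod_XsubC /root horner_real_complex qx0.
have : `|x| < 1 by rewrite -ltcR; apply: le_lt_trans (normc_ge_Re _) x_lt1.
by rewrite ltNge (le_trans x_ge1 (ler_norm x)).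
Qed.

Lemma prod_one_sub_roots_gt0 : 0 < \prod_(r <- rs) (1 - r).
Proof.
have -> : \prod_(r <- rs) (1 - r) = (q.[1])%:C.
  by rewrite -horner_real_complex horner_prod; apply: eq_bigr => r _; rewrite hornerXsubC.
rewrite -[0]/(0%:C) ltcR horner_gt0_above_roots //.
  by rewrite lead_coef_real_factor ltr01.
exact: real_factor_no_root_ge1.
Qed.

End RealPolyInUnitDisc.

Theorem lemma6p4 (R : realType) (N : nat) (AL : 'M[R]_N) (C B : 'cV[R]_N) (mu : R)
    (l m n d : nat) :
  (2 <= N)%N ->
  (0 < l)%N -> (l < n)%N -> (0 < m)%N -> (m < n)%N -> coprime m n ->
  (d < n)%N -> ((m * d) %% n = 1 %% n)%N ->
  shrinking_point AL C B mu (Fseq l m n) n l d ->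
  (* rs = the eigenvalues rho_2, ..., rho_N of M_S (with multiplicity), rho_1 = 1 *)
  forall rs : seq R[i],
    char_poly (map_mx (real_complex R) (Mprod AL C (Fseq l m n) n))
      = ('X - 1) * \prod_(r <- rs) ('X - r%:P) ->
    (* sigma = max_{i>=2} |rho_i| < 1 *)
    (forall r, r \in rs -> `|r| < 1) ->
    (* c = prod_{i>=2} (1 - rho_i) > 0 *)
    0 < \prod_(r <- rs) (1 - r).
Proof.
move=> _ _ _ _ _ _ _ _ _ rs char_M rs_in_disc.
set M := Mprod AL C (Fseq l m n) n.
apply: (@prod_one_sub_roots_gt0 R (char_poly M %/ ('X - 1%:P))) => //.
by apply: map_divp_XsubC; rewrite map_char_poly rmorph1 char_M.
Qed.
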